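(* Let $\hat q$ be an $n\times n$ parametric matrix and $\hat p$ an $n\times n$ parametric matrix, and let $M$ be an $n\times n$ $(\hat q,\hat p)$-Manin matrix with entries in $\mathfrak R$. Then for every multi-index $I=(i_1,\dots,i_n)$ with entries in $\{1,\dots,n\}$, $$\sum_{\sigma\in S_n}\varepsilon(\hat q,\sigma)\,M_{\sigma(1),i_1}M_{\sigma(2),i_2}\cdots M_{\sigma(n),i_n}=\varepsilon(\hat p,I)\,\mathrm{cdet}_{\hat q}(M).$$
   Context: $\mathfrak R$ is an associative unital algebra over $\mathbb C$. A parametric $n\times n$ matrix is a matrix $\hat q=(q_{ij})$ of nonzero complex numbers with $q_{ij}q_{ji}=1$ and $q_{ii}=1$. For parametric matrices $\hat q$ ($n\times n$) and $\hat p$ ($m\times m$), an $n\times m$ matrix $M=(M_{ij})$ with entries in $\mathfrak R$ is a $(\hat q,\hat p)$-Manin matrix if $M_{ik}M_{jk}=q_{ji}M_{jk}M_{ik}$ for all $1\le i<j\le n$, $1\le k\le m$, and $M_{ik}M_{jl}-q_{ji}p_{kl}M_{jl}M_{ik}+p_{kl}M_{il}M_{jk}-q_{ji}M_{jk}M_{il}=0$ for all $i<j$, $k<l$. For a multi-index $I=(i_1,\dots,i_r)$, $\varepsilon(\hat q,I)=0$ if two entries of $I$ coincide, and otherwise $\varepsilon(\hat q,I)=\prod_{s<t,\ i_s>i_t}(-q_{i_si_t})$. For $\sigma\in S_n$, $\varepsilon(\hat q,\sigma)=\prod_{s<t,\ \sigma(s)>\sigma(t)}(-q_{\sigma(s)\sigma(t)})$.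 The column $\hat q$-determinant of an $n\times n$ matrix $M$ is $\mathrm{cdet}_{\hat q}(M)=\sum_{\sigma\in S_n}\varepsilon(\hat q,\sigma)M_{\sigma(1),1}\cdots M_{\sigma(n),n}$. *)

From HB Require Import structures.
From mathcomp Require Import all_boot all_order all_algebra all_fingroup.
From mathcomp Require Import complex.
From mathcomp Require Import Rstruct.
From Stdlib Require Rdefinitions.
Set Implicit Arguments. Unset Strict Implicit. Unset Printing Implicit Defensive.
Import Order.TTheory GRing.Theory Num.Theory.
Local Open Scope ring_scope.


Definition parametric (n : nat) (q : 'M[complex Rdefinitions.R]_n) : Prop :=
  [/\ forall i j, q i j != 0,
      forall i j, q i j * q j i = 1
    & forall i, q i i = 1].

Definition Manin (A : algType (complex Rdefinitions.R)) (n m : nat)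
    (q : 'M[complex Rdefinitions.R]_n) (p : 'M[complex Rdefinitions.R]_m)
    (M : 'M[A]_(n, m)) : Prop :=
  (forall (i j : 'I_n) (k : 'I_m), (i < j)%N ->
      M i k * M j k = q j i *: (M j k * M i k)) /\
  (forall (i j : 'I_n) (k l : 'I_m), (i < j)%N -> (k < l)%N ->
      M i k * M j l - (q j i * p k l) *: (M j l * M i k)
      + p k l *: (M i l * M j k) - q j i *: (M j k * M i l) = 0).

(* epsilon(q, I) for a multi-index I = (i_1,...,i_r) with entries in {1..n}
   (indices shifted to 0..n-1). *)
Definition eps_idx (n r : nat) (q : 'M[complex Rdefinitions.R]_n)
    (I : 'I_r -> 'I_n) : complex Rdefinitions.R :=
  if injectiveb I then
    \prod_(s < r) \prod_(t < r | (s < t)%N && (I t < I s)%N) (- q (I s) (I t))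
  else 0.

Definition eps_perm (n : nat) (q : 'M[complex Rdefinitions.R]_n) (s : 'S_n)
  : complex Rdefinitions.R :=
  \prod_(a < n) \prod_(b < n | (a < b)%N && (s b < s a)%N) (- q (s a) (s b)).

Definition cdet (A : algType (complex Rdefinitions.R)) (n : nat)
    (q : 'M[complex Rdefinitions.R]_n) (M : 'M[A]_n) : A :=
  \sum_(s : 'S_n) eps_perm q s *: \prod_(k < n) M (s k) k.

(* Write F(J) for the left-hand side with column multi-index J, so that
   F(id) = cdet_q(M).  Pairing each permutation s with s composed with the
   adjacent transposition (k k+1) collects F(J) into a sum of terms
   X * D * Y, where D is the 2x2 q-minor of M on rows s(k) < s(k+1) and
   columns J(k), J(k+1).  The Manin relations say exactly that D is
   p-antisymmetric in its columns, so F(J (k k+1)) = -p_{J(k+1) J(k)} F(J)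
   and F(J) = 0 when J(k) = J(k+1); eps(p, J) obeys the same rules.
   Sorting J by adjacent transpositions (induction on its number of
   inversions) reduces the claim to J = id. *)
From HB Require Import structures.
From mathcomp Require Import all_boot all_order all_algebra all_fingroup.
From mathcomp Require Import complex Rstruct.
From mathcomp Require Import zify.
Set Implicit Arguments.
Unset Strict Implicit.
Unset Printing Implicit Defensive.

Import GRing.Theory.
Local Open Scope ring_scope.

Local Notation C := (complex Rdefinitions.R).

Definition inversion n (g : 'I_n -> 'I_n) : pred ('I_n * 'I_n) :=
  fun x => (x.1 < x.2)%N && (g x.2 < g x.1)%N.

Definition inversion_prod (R : comPzRingType) n (q : 'M[R]_n) (g : 'I_n -> 'I_n) : R :=
  \prod_(x : 'I_n * 'I_n | inversion g x) - q (g x.1) (g x.2).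

Lemma eps_permE n (q : 'M[C]_n) (s : 'S_n) : eps_perm q s = inversion_prod q s.
Proof. by rewrite /eps_perm pair_big_dep. Qed.

Lemma eps_idxE n (q : 'M[C]_n) (g : 'I_n -> 'I_n) :
  eps_idx q g = if injectiveb g then inversion_prod q g else 0.
Proof. by rewrite /eps_idx pair_big_dep. Qed.

Lemma eps_idx_eq0 n (q : 'M[C]_n) (g : 'I_n -> 'I_n) (i j : 'I_n) :
  i != j -> g i = g j -> eps_idx q g = 0.
Proof.
move=> /negP neq_ij eq_g; rewrite eps_idxE; case: injectiveP => // inj_g.
by case: neq_ij; rewrite (inj_g _ _ eq_g).
Qed.

Lemma eps_idx_id n (q : 'M[C]_n) (g : 'I_n -> 'I_n) : g =1 id -> eps_idx q g = 1.
Proof.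
move=> gE; rewrite eps_idxE; have /injectiveP -> : injective g.
  by move=> x y; rewrite !gE.
by apply: big1 => x /andP[lt_x]; rewrite !gE ltnNge (ltnW lt_x).
Qed.

Definition qminor (A : algType C) n (q : 'M[C]_n) (M : 'M[A]_n) (i j c d : 'I_n) : A :=
  M i c * M j d - q j i *: (M j c * M i d).

Definition cdet_term (A : algType C) n (q : 'M[C]_n) (M : 'M[A]_n)
    (J : 'I_n -> 'I_n) (s : 'S_n) : A :=
  eps_perm q s *: \prod_(m < n) M (s m) (J m).

Definition cdet_idx (A : algType C) n (q : 'M[C]_n) (M : 'M[A]_n) (J : 'I_n -> 'I_n) : A :=
  \sum_(s : 'S_n) cdet_term q M J s.

Section ManinMinor.

Variables (A : algType C) (n : nat) (q p : 'M[C]_n) (M : 'M[A]_n).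
Hypotheses (hp : parametric p) (hM : Manin q p M).

Lemma qminor_diag (i j c : 'I_n) : (i < j)%N -> qminor q M i j c c = 0.
Proof. by move=> lt_ij; rewrite /qminor hM.1 // subrr. Qed.

Lemma qminor_Manin (i j c d : 'I_n) : (i < j)%N -> (c < d)%N ->
  qminor q M i j c d + p c d *: qminor q M i j d c = 0.
Proof.
move=> lt_ij lt_cd; rewrite -(hM.2 i j c d lt_ij lt_cd) /qminor scalerBr scalerA.
rewrite [p c d * _]mulrC addrAC -!addrA; congr (_ + _).
by rewrite [RHS]addrCA addrC.
Qed.

Lemma qminor_swap (i j c d : 'I_n) : (i < j)%N ->
  qminor q M i j d c = - p d c *: qminor q M i j c d.
Proof.
move=> lt_ij; case: hp => _ pK _.
have [lt_cd|lt_dc|/val_inj ->] := ltngtP c d.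
- move/eqP: (qminor_Manin lt_ij lt_cd); rewrite addr_eq0 => /eqP ->.
  by rewrite scalerN scaleNr opprK scalerA pK scale1r.
- by apply/eqP; rewrite scaleNr -addr_eq0 qminor_Manin.
- by rewrite qminor_diag // scaler0.
Qed.

End ManinMinor.

Section AdjacentTransposition.

Variables (n : nat) (k k' : 'I_n).
Hypothesis adj : k' = k.+1 :> nat.

Local Notation tau := (tperm k k').

Lemma adj_neq : k != k'.
Proof. by apply/eqP => eq_kk'; move: adj; rewrite eq_kk'; lia. Qed.

Lemma ltn_tperm_adj (x y : 'I_n) :
  (tau x < tau y)%N =
  if (x == k) && (y == k') then false
  else if (x == k') && (y == k) then true else (x < y)%N.
Proof.
case: tpermP => [->|->|/eqP nxk /eqP nxk']; case: tpermP => [->|->|/eqP nyk /eqP nyk'];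
  rewrite ?eqxx ?(negbTE adj_neq) ?(eq_sym k') ?(negbTE adj_neq)
    ?(negbTE nxk) ?(negbTE nxk') ?(negbTE nyk) ?(negbTE nyk') ?ltnn //=.
all: try (move: nxk nxk'); try (move: nyk nyk'); rewrite -?val_eqE /=; lia.
Qed.

Section Inversions.

Variables (g g' : 'I_n -> 'I_n).
Hypotheses (g'E : forall x, g' x = g (tau x)) (lt_g : (g k < g k')%N).

Lemma big_inversion_tperm (R : Type) (idx : R) (op : Monoid.com_law idx)
    (F : 'I_n -> 'I_n -> R) :
  \big[op/idx]_(x | inversion g' x) F (g' x.1) (g' x.2)
  = op (F (g k') (g k)) (\big[op/idx]_(x | inversion g x) F (g x.1) (g x.2)).
Proof.
rewrite (reindex_inj (h := fun y => (tau y.1, tau y.2))) /=; last first.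
  by move=> [a b] [c d] /= [/perm_inj -> /perm_inj ->].
rewrite (bigD1 (k', k)) /=; last first.
  by rewrite /inversion /= !g'E !tpermK tpermL tpermR lt_g adj ltnSn.
rewrite !g'E !tpermK; congr (op _ _).
apply: eq_big => -[y1 y2]; rewrite /inversion /= !g'E !tpermK //.
rewrite ltn_tperm_adj xpair_eqE.
have [-> | _] := eqVneq y1 k; have [-> | _] := eqVneq y2 k';
  rewrite ?eqxx ?(negbTE adj_neq) ?(eq_sym k') ?(negbTE adj_neq) ?andbF ?andbT //=.
- by rewrite [(g k' < _)%N]ltnNge (ltnW lt_g) andbF.
- have [-> | _] := eqVneq y1 k'; have [-> | _] := eqVneq y2 k;
    rewrite ?eqxx ?andbT ?andbF //=.
  by rewrite adj ltnNge leqnSn.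
Qed.

Lemma card_inversion_tperm : #|inversion g'| = #|inversion g|.+1.
Proof. by rewrite -!sum1_card (big_inversion_tperm addn (fun _ _ => 1%N)). Qed.

Lemma inversion_prod_tperm (R : comPzRingType) (q : 'M[R]_n) :
  inversion_prod q g' = - q (g k') (g k) * inversion_prod q g.
Proof. exact: (big_inversion_tperm *%R (fun a b => - q a b)). Qed.

End Inversions.

Lemma prod_adj_factor (R : pzSemiRingType) (f : 'I_n -> R) :
  exists X Y, forall g : 'I_n -> R, (forall m, m != k -> m != k' -> g m = f m) ->
    \prod_(m < n) g m = X * (g k * g k') * Y.
Proof.
exists (\prod_(0 <= m < k) f (insubd k m)), (\prod_(k.+2 <= m < n) f (insubd k m)).
move=> g gE; have lt_k'n := ltn_ord k'.
have insubd_out m : (m < k)%N || (k.+2 <= m < n)%N -> g (insubd k m) = f (insubd k m).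
  move=> m_out; apply: gE; rewrite -val_eqE /= insubdK; lia.
have -> : \prod_(m < n) g m = \prod_(0 <= m < n) g (insubd k m).
  by rewrite big_mkord; apply: eq_bigr => m _; rewrite valKd.
rewrite (@big_cat_nat _ _ _ k 0 n) //; last exact: ltnW.
rewrite (@big_ltn _ _ _ k) // (@big_ltn _ _ _ k.+1); last by rewrite -adj.
have -> : insubd k k.+1 = k' by apply: val_inj; rewrite insubdK -?adj.
rewrite valKd /= !mulrA; congr (_ * _ * _ * _).
all: by apply: eq_big_nat => m m_out; apply: insubd_out; lia.
Qed.

Lemma sum_perm_tperm (V : nmodType) (G : 'S_n -> V) :
  \sum_(s : 'S_n) G s = \sum_(s : 'S_n | (s k < s k')%N) (G s + G (tau * s)%g).
Proof.
rewrite (bigID (fun s : 'S_n => (s k < s k')%N)) /= big_split /=; congr (_ + _).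
rewrite (reindex_inj (mulgI tau)) /=; apply: eq_bigl => s.
by rewrite !permM tpermL tpermR -leqNgt leq_eqVlt val_eqE (inj_eq perm_inj) (negbTE adj_neq).
Qed.

Lemma eps_perm_tperm (q : 'M[C]_n) (s : 'S_n) : (s k < s k')%N ->
  eps_perm q (tau * s)%g = - q (s k') (s k) * eps_perm q s.
Proof.
by move=> lt_s; rewrite !eps_permE (inversion_prod_tperm (g := s)) // => x; rewrite permM.
Qed.

Lemma eps_idx_tperm (q : 'M[C]_n) (g g' : 'I_n -> 'I_n) :
  (forall x, g' x = g (tau x)) -> (g k < g k')%N ->
  eps_idx q g' = - q (g k') (g k) * eps_idx q g.
Proof.
move=> g'E lt_g; rewrite !eps_idxE (inversion_prod_tperm g'E lt_g).
have -> : injectiveb g' = injectiveb g.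
  apply/injectiveP/injectiveP => inj x y.
    by move=> gxy; apply: (perm_inj (s := tau)); apply: inj; rewrite !g'E !tpermK.
  by rewrite !g'E => /inj /perm_inj.
by case: injectiveb; rewrite ?mulr0.
Qed.

Section ColumnSwap.

Variables (A : algType C) (q : 'M[C]_n) (M : 'M[A]_n).

Lemma cdet_term_pair_factor (J : 'I_n -> 'I_n) (s : 'S_n) : (s k < s k')%N ->
  exists X Y, forall J' : 'I_n -> 'I_n, (forall m, m != k -> m != k' -> J' m = J m) ->
    cdet_term q M J' s + cdet_term q M J' (tau * s)%g
    = eps_perm q s *: (X * qminor q M (s k) (s k') (J' k) (J' k') * Y).
Proof.
move=> lt_s; have [X [Y XY]] := prod_adj_factor (fun m => M (s m) (J m)).
exists X, Y => J' J'E; rewrite /cdet_term (XY (fun m => M (s m) (J' m))); last first.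
  by move=> m mk mk'; rewrite J'E.
rewrite (XY (fun m => M ((tau * s)%g m) (J' m))) /=; last first.
  by move=> m mk mk'; rewrite permM tpermD 1?eq_sym // J'E.
rewrite !permM tpermL tpermR eps_perm_tperm // /qminor.
by rewrite mulrBr mulrBl scalerBr -scalerAr -scalerAl scalerA mulNr scaleNr mulrC.
Qed.

Lemma cdet_idx_tperm (p : 'M[C]_n) (J J' : 'I_n -> 'I_n) :
  parametric p -> Manin q p M -> (forall x, J' x = J (tau x)) ->
  cdet_idx q M J' = - p (J k') (J k) *: cdet_idx q M J.
Proof.
move=> hp hM J'E; rewrite /cdet_idx !sum_perm_tperm scaler_sumr.
apply: eq_bigr => s lt_s; have [X [Y XY]] := cdet_term_pair_factor J lt_s.
rewrite (XY J) // (XY J'); last by move=> m mk mk'; rewrite J'E tpermD // eq_sym.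
by rewrite !J'E tpermL tpermR (qminor_swap hp hM) // -scalerAr -scalerAl !scalerA mulrC.
Qed.

Lemma cdet_idx_eq0 (p : 'M[C]_n) (J : 'I_n -> 'I_n) :
  Manin q p M -> J k = J k' -> cdet_idx q M J = 0.
Proof.
move=> hM eq_J; rewrite /cdet_idx sum_perm_tperm; apply: big1 => s lt_s.
have [X [Y XY]] := cdet_term_pair_factor J lt_s.
by rewrite XY // eq_J (qminor_diag hM) // mulr0 mul0r scaler0.
Qed.

End ColumnSwap.

End AdjacentTransposition.

Lemma adj_increasing_ge n (J : 'I_n -> 'I_n) :
  (forall i j : 'I_n, j = i.+1 :> nat -> (J i < J j)%N) -> forall i : 'I_n, (i <= J i)%N.
Proof.
move=> incJ [m]; elim: m => [|m IHm] lt_mn //=.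
have lt_m : (m < n)%N := ltnW lt_mn.
exact: leq_ltn_trans (IHm lt_m) (@incJ (Ordinal lt_m) (Ordinal lt_mn) erefl).
Qed.

Lemma adj_increasing_id n (J : 'I_n -> 'I_n) :
  (forall i j : 'I_n, j = i.+1 :> nat -> (J i < J j)%N) -> J =1 id.
Proof.
move=> incJ i; apply/val_inj/eqP; rewrite eqn_leq (adj_increasing_ge incJ) andbT.
pose J' i := rev_ord (J (rev_ord i)).
have incJ' (a b : 'I_n) : b = a.+1 :> nat -> (J' a < J' b)%N.
  move=> ba; have := @incJ (rev_ord b) (rev_ord a); rewrite /J' /= ba.
  have := ltn_ord (J (rev_ord a)); have := ltn_ord (J (rev_ord b)); have := ltn_ord b; lia.
have := adj_increasing_ge incJ' (rev_ord i); rewrite /J' rev_ordK /=.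
have := ltn_ord (J i); have := ltn_ord i; lia.
Qed.

Lemma cdet_idxE (A : algType C) n (q p : 'M[C]_n) (M : 'M[A]_n) (J : 'I_n -> 'I_n) :
  parametric p -> Manin q p M -> cdet_idx q M J = eps_idx p J *: cdet q M.
Proof.
move=> hp hM; have [N] := ubnP #|inversion J|; elim: N J => // N IH J.
rewrite ltnS => inv_J.
case: (pickP (fun x : 'I_n * 'I_n => (x.2 == x.1.+1 :> nat) && (J x.2 <= J x.1)%N)).
  move=> [k k'] /andP[/eqP /= adj]; rewrite leq_eqVlt => /orP[/eqP/val_inj tie | descent].
    by rewrite (cdet_idx_eq0 adj hM (esym tie)) (eps_idx_eq0 _ (adj_neq adj) (esym tie)) scale0r.
  pose G x := J (tperm k k' x).
  have JE x : J x = G (tperm k k' x) by rewrite /G tpermK.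
  have lt_G : (G k < G k')%N by rewrite /G tpermL tpermR.
  rewrite (cdet_idx_tperm adj hp hM JE) (eps_idx_tperm adj _ JE lt_G) -scalerA IH //.
  by rewrite -ltnS -(card_inversion_tperm adj JE lt_G).
move=> ascending; have idJ : J =1 id.
  apply: adj_increasing_id => i j ji; have := ascending (i, j).
  by rewrite /= ji eqxx leqNgt => /negbFE.
rewrite (eps_idx_id _ idJ) scale1r; apply: eq_bigr => s _.
by rewrite /cdet_term; congr (_ *: _); apply: eq_bigr => m _; rewrite idJ.
Qed.

Theorem mainTheorem1 (A : algType (complex Rdefinitions.R)) (n : nat)
    (q p : 'M[complex Rdefinitions.R]_n) (M : 'M[A]_n)
    (hq : parametric q) (hp : parametric p) (hM : Manin q p M)
    (I : 'I_n -> 'I_n) :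
  \sum_(s : 'S_n) eps_perm q s *: \prod_(k < n) M (s k) (I k)
  = eps_idx p I *: cdet q M.
Proof.
exact: cdet_idxE.
Qed.
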